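(* For every $n\ge1$ and all two-sided ideals $I,J$ of $\mathbb{S}_n$, we have $IJ=JI$.
   Context: $K$ is a field. $\mathbb{S}_n$ is the $K$-algebra generated by $x_1,\dots,x_n,y_1,\dots,y_n$ subject to the defining relations $y_ix_i=1$ for all $i$, and $[x_i,y_j]=[x_i,x_j]=[y_i,y_j]=0$ for all $i\ne j$, where $[a,b]=ab-ba$. *)

From HB Require Import structures.
From mathcomp Require Import all_boot all_order all_algebra.
Set Implicit Arguments. Unset Strict Implicit. Unset Printing Implicit Defensive.
Import GRing.Theory.
Local Open Scope ring_scope.

Definition Sn_rels (K : fieldType) (B : algType K) (n : nat)
    (x y : 'I_n -> B) : Prop :=
  (forall i, y i * x i = 1) /\
  (forall i j : 'I_n, i != j ->
     [/\ x i * y j = y j * x i, x i * x j = x j * x i & y i * y j = y j * y i]).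

(* (A, x, y) is the K-algebra presented by generators x_i, y_i and the
   relations above, i.e. it satisfies the universal property of S_n. *)
Definition is_Sn (K : fieldType) (n : nat) (A : algType K)
    (x y : 'I_n -> A) : Prop :=
  Sn_rels x y /\
  forall (B : algType K) (u v : 'I_n -> B), Sn_rels u v ->
    (exists f : {lrmorphism A -> B}, forall i, f (x i) = u i /\ f (y i) = v i) /\
    (forall f g : {lrmorphism A -> B},
        (forall i, f (x i) = u i /\ f (y i) = v i) ->
        (forall i, g (x i) = u i /\ g (y i) = v i) -> f =1 g).

Definition two_sided_ideal (A : nzRingType) (I : A -> Prop) : Prop :=
  I 0 /\ (forall a b, I a -> I b -> I (a + b)) /\
  (forall r a, I a -> I (r * a) /\ I (a * r)).

Definition ideal_mul (A : nzRingType) (I J : A -> Prop) : A -> Prop :=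
  fun c => exists s : seq (A * A),
    (forall p, p \in s -> I p.1 /\ J p.2) /\ c = \sum_(p <- s) p.1 * p.2.

From HB Require Import structures.
From mathcomp Require Import all_boot all_order all_algebra.
From Stdlib Require Import ClassicalEpsilon.
Set Implicit Arguments. Unset Strict Implicit. Unset Printing Implicit Defensive.
Import GRing.Theory.
Local Open Scope ring_scope.

(* Let p_i = 1 - x_i y_i and, for a set S of indices, p_S = prod_{i in S} p_i;
   let D_S be the ideal generated by the p_(S + j), j outside S.  Writing
   M = JI, the argument rests on three facts about the algebra generated by
   the x_i, y_i subject to the relations of S_n:
   - the corner p_S A p_S is p_S times the subalgebra generated by the
     variables outside S, and that subalgebra is commutative modulo D_S;
     hence every corner p_S y^g (uv) x^h p_S with u in I, v in J lies in M + D_S;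
   - the elements x^e p_S y^e (e supported on S) behave like diagonal matrix
     units whose finite sums are local units on the ideal (p_S); hence an
     element of (p_S) whose corners all lie in M + D_S lies in M + D_S;
   - peeling off the ideals (p_S), S of minimal size first, an element of the
     ideal generated by the p_S, S in an up-closed family, all of whose
     corners lie in the corresponding M + D_S, lies in M; for the family of
     all sets this ideal is A itself, as p_set0 = 1.
   Finally, the universal property of S_n shows that the x_i, y_i generate it. *)


Section AdditiveSpan.
Variable V : zmodType.
Implicit Types (P Q : V -> Prop) (a b : V).

Inductive addspan P : V -> Prop :=
| addspan0 : addspan P 0
| addspan_gen a : P a -> addspan P a
| addspanD a b : addspan P a -> addspan P b -> addspan P (a + b).

Lemma addspan_sum P (I : Type) (r : seq I) (F : I -> V) :
  (forall k, addspan P (F k)) -> addspan P (\sum_(k <- r) F k).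
Proof. by move=> hF; apply: big_ind => //; [exact: addspan0 | exact: addspanD]. Qed.

Lemma addspan_map P Q (f : V -> V) :
  f 0 = 0 -> {morph f : a b / a + b} -> (forall a, P a -> addspan Q (f a)) ->
  forall a, addspan P a -> addspan Q (f a).
Proof.
move=> f0 fD fP a; elim=> {a} [|a /fP //|a b _ ha _ hb].
  by rewrite f0; exact: addspan0.
by rewrite fD; exact: addspanD.
Qed.

Lemma addspan_sub P Q : (forall a, P a -> addspan Q a) ->
  forall a, addspan P a -> addspan Q a.
Proof. exact: (@addspan_map P Q id). Qed.

Lemma addspan_closed P Q : (forall a, P a -> Q a) -> Q 0 ->
  (forall a b, Q a -> Q b -> Q (a + b)) -> forall a, addspan P a -> Q a.
Proof.
move=> PQ Q0 QD a; elim=> {a} [//|a /PQ //|a b _ ha _ hb]; exact: QD.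
Qed.

Lemma addspan_idem P a : addspan (addspan P) a -> addspan P a.
Proof. exact: addspan_sub. Qed.

Lemma addspan_union P Q a : addspan (fun z => P z \/ Q z) a ->
  exists b c, [/\ addspan P b, addspan Q c & a = b + c].
Proof.
elim=> [|z [Pz|Qz]|a1 a2 _ [b1 [c1 [? ? ->]]] _ [b2 [c2 [? ? ->]]]].
- by exists 0, 0; split; rewrite ?addr0 //; exact: addspan0.
- by exists z, 0; split; rewrite ?addr0 //; [exact: addspan_gen | exact: addspan0].
- by exists 0, z; split; rewrite ?add0r //; [exact: addspan0 | exact: addspan_gen].
- exists (b1 + b2), (c1 + c2).
  by split; [exact: addspanD | exact: addspanD | rewrite addrACA].
Qed.

End AdditiveSpan.

Section SpanMul.
Variable R : pzRingType.
Implicit Types (P Q : R -> Prop).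

Lemma addspan_mull P Q w : (forall a, P a -> addspan Q (w * a)) ->
  forall a, addspan P a -> addspan Q (w * a).
Proof. exact: addspan_map (mulr0 w) (mulrDr w). Qed.

Lemma addspan_mulr P Q w : (forall a, P a -> addspan Q (a * w)) ->
  forall a, addspan P a -> addspan Q (a * w).
Proof. by apply: addspan_map; [exact: mul0r | move=> a b; exact: mulrDl]. Qed.

End SpanMul.

Section Products.
Variable R : pzRingType.

Lemma prod_mul_comm (I : Type) (s : seq I) (F G : I -> R) :
  (forall i k, GRing.comm (G i) (F k)) ->
  \prod_(i <- s) (G i * F i) = \prod_(i <- s) G i * \prod_(i <- s) F i.
Proof.
move=> hc; elim: s => [|a s IH]; first by rewrite !big_nil mulr1.
rewrite !big_cons IH !mulrA; congr (_ * _); rewrite -!mulrA; congr (_ * _).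
by apply: commr_prod => i _; exact/commr_sym.
Qed.

Lemma prod_at (I : finType) (j : I) (c : R) :
  \prod_(i : I) (if i == j then c else 1) = c.
Proof. by rewrite -big_mkcond big_pred1_eq. Qed.

Lemma prod_fix_l (I : Type) (s : seq I) (F : I -> R) z :
  (forall i, F i * z = z) -> \prod_(i <- s) F i * z = z.
Proof.
move=> h; elim: s => [|a s IH]; first by rewrite big_nil mul1r.
by rewrite big_cons -mulrA IH h.
Qed.

Lemma prod_fix_r (I : Type) (s : seq I) (F : I -> R) z :
  (forall i, z * F i = z) -> z * \prod_(i <- s) F i = z.
Proof.
move=> h; elim: s => [|a s IH]; first by rewrite big_nil mulr1.
by rewrite big_cons mulrA h IH.
Qed.

(* The product of a family over a subset S of a finite index type, taken in
   the order of the index type; for commuting families it is insensitive to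
   that order, which makes it possible to peel off one factor. *)
Definition setprod (I : finType) (S : {set I}) (f : I -> R) :=
  \prod_(i : I) (if i \in S then f i else 1).

Lemma setprod0 (I : finType) (f : I -> R) : setprod set0 f = 1.
Proof. by rewrite /setprod big1 // => k _; rewrite inE. Qed.

Lemma setprod_add (I : finType) (f : I -> R) (j : I) (T : {set I}) :
  (forall i k, GRing.comm (f i) (f k)) -> j \notin T ->
  setprod (j |: T) f = f j * setprod T f.
Proof.
move=> cf jT; rewrite /setprod -[in f j * _](prod_at j (f j)) -prod_mul_comm.
  apply: eq_bigr => k _; rewrite in_setU1; case: (eqVneq k j) => [->|_] /=.
    by rewrite (negbTE jT) mulr1.
  by rewrite mul1r.
move=> k l; case: eqP => _; last exact/commr_sym/commr1.
by case: (l \in T); [exact: cf | exact: commr1].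
Qed.

End Products.

Section Generators.
Variables (K : fieldType) (n : nat) (A : algType K) (x y : 'I_n -> A).
Hypothesis yx : forall i, y i * x i = 1.
Hypothesis comm_ne : forall i j, i != j ->
  [/\ x i * y j = y j * x i, x i * x j = x j * x i & y i * y j = y j * y i].

Local Notation comm := GRing.comm.
Implicit Types (S T : {set 'I_n}) (F : {set {set 'I_n}}) (i j : 'I_n) (g h : 'I_n -> nat).

Lemma comm_xx i j : comm (x i) (x j).
Proof. by case: (eqVneq i j) => [->|/comm_ne[]]. Qed.
Lemma comm_yy i j : comm (y i) (y j).
Proof. by case: (eqVneq i j) => [->|/comm_ne[]]. Qed.
Lemma comm_xy i j : i != j -> comm (x i) (y j).
Proof. by case/comm_ne. Qed.
Lemma comm_yx i j : i != j -> comm (y i) (x j).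
Proof. by rewrite eq_sym => /comm_xy/commr_sym. Qed.

Definition p i := 1 - x i * y i.

Lemma p_idem i : p i * p i = p i.
Proof.
rewrite /p mulrBl mul1r mulrBr mulr1 !mulrA -(mulrA (x i)) yx mulr1.
by rewrite subrr subr0.
Qed.
Lemma p_x i : p i * x i = 0.
Proof. by rewrite /p mulrBl mul1r -mulrA yx mulr1 subrr. Qed.
Lemma y_p i : y i * p i = 0.
Proof. by rewrite /p mulrBr mulr1 mulrA yx mul1r subrr. Qed.
Lemma comm_px i j : i != j -> comm (p i) (x j).
Proof.
move=> ij; apply/commr_sym/commrB; first exact: commr1.
by apply: commrM; [exact: comm_xx | apply: comm_xy; rewrite eq_sym].
Qed.
Lemma comm_py i j : i != j -> comm (p i) (y j).
Proof.
move=> ij; apply/commr_sym/commrB; first exact: commr1.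
by apply: commrM; [apply: comm_yx; rewrite eq_sym | exact: comm_yy].
Qed.
Lemma comm_pp i j : comm (p i) (p j).
Proof.
case: (eqVneq i j) => [->//|ij]; apply: commrB; first exact: commr1.
by apply: commrM; [apply: comm_px | apply: comm_py].
Qed.

Definition upd g i k := fun j => if j == i then k else g j.
Definition xm g := \prod_(i < n) x i ^+ g i.
Definition ym g := \prod_(i < n) y i ^+ g i.
Definition supported g S := forall i, i \notin S -> g i = 0%N.

Lemma supported_upd g S i k : supported g S -> i \in S -> supported (upd g i k) S.
Proof.
by move=> sg iS j jS; rewrite /upd; case: eqP => [e|_]; [rewrite e iS in jS | exact: sg].
Qed.

Lemma xm_eq g h : g =1 h -> xm g = xm h.
Proof. by move=> e; apply: eq_bigr => k _; rewrite e. Qed.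
Lemma ym_eq g h : g =1 h -> ym g = ym h.
Proof. by move=> e; apply: eq_bigr => k _; rewrite e. Qed.
Lemma xm0 : xm (fun _ => 0%N) = 1.
Proof. by rewrite /xm big1 // => k _; rewrite expr0. Qed.
Lemma ym0 : ym (fun _ => 0%N) = 1.
Proof. by rewrite /ym big1 // => k _; rewrite expr0. Qed.

Lemma xm_split i g : xm g = x i ^+ g i * xm (upd g i 0).
Proof.
rewrite /xm -[in x i ^+ g i](prod_at i (x i ^+ g i)) -prod_mul_comm.
  by apply: eq_bigr => k _; rewrite /upd; case: eqP => [->|_]; rewrite ?expr0 ?mulr1 ?mul1r.
move=> k l; case: eqP => _; last exact/commr_sym/commr1.
by apply/commr_sym/commrX/commr_sym/commrX; exact: comm_xx.
Qed.
Lemma ym_split i g : ym g = ym (upd g i 0) * y i ^+ g i.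
Proof.
rewrite /ym -[in y i ^+ g i](prod_at i (y i ^+ g i)) -prod_mul_comm.
  by apply: eq_bigr => k _; rewrite /upd; case: eqP => [->|_]; rewrite ?expr0 ?mulr1 ?mul1r.
move=> k l; case: eqP => _; last exact: commr1.
by apply/commrX/commr_sym/commrX; exact: comm_yy.
Qed.

Lemma x_xm i g : x i * xm g = xm (upd g i (g i).+1).
Proof.
rewrite (xm_split i g) (xm_split i (upd g i (g i).+1)) mulrA -exprS /upd eqxx.
by congr (_ * _); apply: xm_eq => k; case: eqP.
Qed.
Lemma ym_y i g : ym g * y i = ym (upd g i (g i).+1).
Proof.
rewrite (ym_split i g) (ym_split i (upd g i (g i).+1)) -mulrA -exprSr /upd eqxx.
by congr (_ * _); apply: ym_eq => k; case: eqP.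
Qed.

Lemma comm_x_xm i g : comm (x i) (xm g).
Proof. by apply: commr_prod => k _; apply: commrX; exact: comm_xx. Qed.
Lemma comm_y_ym i g : comm (y i) (ym g).
Proof. by apply: commr_prod => k _; apply: commrX; exact: comm_yy. Qed.

Lemma comm_xm_off i g z : g i = 0%N -> (forall k, k != i -> comm z (x k)) ->
  comm z (xm g).
Proof.
move=> gi hz; apply: commr_prod => k _; case: (eqVneq k i) => [->|ki].
  by rewrite gi expr0; exact: commr1.
exact/commrX/hz.
Qed.
Lemma comm_ym_off i g z : g i = 0%N -> (forall k, k != i -> comm z (y k)) ->
  comm z (ym g).
Proof.
move=> gi hz; apply: commr_prod => k _; case: (eqVneq k i) => [->|ki].
  by rewrite gi expr0; exact: commr1.
exact/commrX/hz.
Qed.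

Lemma comm_y_xm i g : g i = 0%N -> comm (y i) (xm g).
Proof. by move=> gi; apply: comm_xm_off gi _ => k ki; apply: comm_yx; rewrite eq_sym. Qed.
Lemma comm_x_ym i g : g i = 0%N -> comm (x i) (ym g).
Proof. by move=> gi; apply: comm_ym_off gi _ => k ki; apply: comm_xy; rewrite eq_sym. Qed.
Lemma comm_p_xm i g : g i = 0%N -> comm (p i) (xm g).
Proof. by move=> gi; apply: comm_xm_off gi _ => k ki; apply: comm_px; rewrite eq_sym. Qed.
Lemma comm_p_ym i g : g i = 0%N -> comm (p i) (ym g).
Proof. by move=> gi; apply: comm_ym_off gi _ => k ki; apply: comm_py; rewrite eq_sym. Qed.

Definition pS S := setprod S p.

Lemma pS_add j T : j \notin T -> pS (j |: T) = p j * pS T.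
Proof. exact: setprod_add comm_pp. Qed.
Lemma pS_split j S : j \in S -> pS S = p j * pS (S :\ j).
Proof. by move=> jS; rewrite -pS_add ?setD1K // !inE eqxx. Qed.

Lemma pS_idem S : pS S * pS S = pS S.
Proof.
rewrite /pS /setprod -prod_mul_comm; last first.
  move=> k l; case: (k \in S); case: (l \in S);
  by [exact: comm_pp | exact: commr1 | exact/commr_sym/commr1].
by apply: eq_bigr => k _; case: (k \in S); rewrite ?p_idem ?mulr1.
Qed.

Lemma comm_pS S z : (forall i, i \in S -> comm (p i) z) -> comm (pS S) z.
Proof.
move=> h; apply/commr_sym/commr_prod => k _; case: ifP => kS; last exact: commr1.
exact/commr_sym/h.
Qed.
Lemma comm_pS_p S i : comm (pS S) (p i).
Proof. by apply: comm_pS => k _; exact: comm_pp. Qed.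
Lemma comm_pS_x S i : i \notin S -> comm (pS S) (x i).
Proof.
by move=> iS; apply: comm_pS => k kS; apply: comm_px; apply: contraNneq iS => <-.
Qed.
Lemma comm_pS_y S i : i \notin S -> comm (pS S) (y i).
Proof.
by move=> iS; apply: comm_pS => k kS; apply: comm_py; apply: contraNneq iS => <-.
Qed.

Lemma pS_x S i : i \in S -> pS S * x i = 0.
Proof. by move=> iS; rewrite (pS_split iS) -(comm_pS_p (S :\ i) i) -mulrA p_x mulr0. Qed.
Lemma y_pS S i : i \in S -> y i * pS S = 0.
Proof. by move=> iS; rewrite (pS_split iS) mulrA y_p mul0r. Qed.

Lemma y_xm_pS S i g : i \in S ->
  y i * (xm g * pS S) = if g i is k.+1 then xm (upd g i k) * pS S else 0.
Proof.
move=> iS; rewrite (xm_split i g); case: (g i) => [|k].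
  rewrite expr0 mul1r mulrA (comm_y_xm (g := upd g i 0)); last by rewrite /upd eqxx.
  by rewrite -mulrA y_pS // mulr0.
rewrite !mulrA exprS mulrA yx mul1r (xm_split i (upd g i k)) /upd eqxx.
by congr (_ * _ * _); apply: xm_eq => l; case: eqP.
Qed.
Lemma pS_ym_x S i h : i \in S ->
  (pS S * ym h) * x i = if h i is k.+1 then pS S * ym (upd h i k) else 0.
Proof.
move=> iS; rewrite (ym_split i h); case: (h i) => [|k].
  rewrite expr0 mulr1 -mulrA -(comm_x_ym (g := upd h i 0)); last by rewrite /upd eqxx.
  by rewrite mulrA pS_x // mul0r.
rewrite -!mulrA exprSr -mulrA yx mulr1 (ym_split i (upd h i k)) /upd eqxx.
by congr (_ * (_ * _)); apply: ym_eq => l; case: eqP.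
Qed.

Lemma yX_xm_pS S i g k : i \in S -> (g i < k)%N -> y i ^+ k * (xm g * pS S) = 0.
Proof.
move=> iS; elim: k g => [|k IH] g //= lt.
rewrite exprSr -mulrA y_xm_pS //; case E: (g i) => [|m]; first by rewrite mulr0.
by apply: IH; rewrite /upd eqxx; rewrite E ltnS in lt.
Qed.
Lemma pS_ym_xX S i h k : i \in S -> (h i < k)%N -> (pS S * ym h) * x i ^+ k = 0.
Proof.
move=> iS; elim: k h => [|k IH] h //= lt.
rewrite exprS mulrA pS_ym_x //; case E: (h i) => [|m]; first by rewrite mul0r.
by apply: IH; rewrite /upd eqxx; rewrite E ltnS in lt.
Qed.

Definition cutoff S B := setprod S (fun i => 1 - x i ^+ B * y i ^+ B).

Lemma cutoff_l S B g : (forall i, g i < B)%N -> cutoff S B * (xm g * pS S) = xm g * pS S.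
Proof.
move=> lt; apply: prod_fix_l => i; case: ifP => iS; last by rewrite mul1r.
by rewrite mulrBl mul1r -mulrA yX_xm_pS // mulr0 subr0.
Qed.
Lemma cutoff_r S B h : (forall i, h i < B)%N -> (pS S * ym h) * cutoff S B = pS S * ym h.
Proof.
move=> lt; apply: prod_fix_r => i; case: ifP => iS; last by rewrite mulr1.
by rewrite mulrBr mulr1 mulrA pS_ym_xX // mul0r subr0.
Qed.

Lemma exponent_bound g : exists B, forall i, (g i < B)%N.
Proof.
exists (\big[maxn/0%N]_(j < n) (g j).+1) => i.
exact: (leq_bigmax (F := fun j : 'I_n => (g j).+1) i).
Qed.

Inductive subgen (U : {set 'I_n}) : A -> Prop :=
| gen1 : subgen U 1
| gen_x i : i \in U -> subgen U (x i)
| gen_y i : i \in U -> subgen U (y i)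
| genD a b : subgen U a -> subgen U b -> subgen U (a + b)
| genM a b : subgen U a -> subgen U b -> subgen U (a * b)
| genZ (c : K) a : subgen U a -> subgen U (c *: a).

Lemma gen0 U : subgen U 0.
Proof. by rewrite -(scale0r (1 : A)); apply: genZ; exact: gen1. Qed.

Lemma comm_pS_gen S c : subgen (~: S) c -> comm (pS S) c.
Proof.
elim=> {c} [|i|i|a b _ ha _ hb|a b _ ha _ hb|k a _ ha].
- exact: commr1.
- by rewrite inE; exact: comm_pS_x.
- by rewrite inE; exact: comm_pS_y.
- exact: commrD.
- exact: commrM.
- by rewrite /comm -scalerAr ha scalerAl.
Qed.

(* Spanning sets for the one-sided ideals generated by p_S (lemmas lspan_pS
   and rspan_pS below): the x^g p_S c with g supported on S and c in the
   subalgebra of the other variables span A p_S, and the d p_S y^h with h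
   supported on S span p_S A. *)
Definition lspan S := addspan (fun z =>
  exists g c, [/\ supported g S, subgen (~: S) c & z = xm g * pS S * c]).
Definition rspan S := addspan (fun z =>
  exists d h, supported h S /\ z = d * pS S * ym h).

Lemma lspan_mul_gen S i z : lspan S z ->
  lspan S (x i * z) /\ lspan S (y i * z).
Proof.
move=> hz; split; move: z hz; apply: addspan_mull => _ [g [c [sg gc ->]]].
- apply: addspan_gen; case: (boolP (i \in S)) => iS.
    by exists (upd g i (g i).+1), c; rewrite !mulrA x_xm; split => //; exact: supported_upd.
  exists g, (x i * c); split => //; first by apply: genM => //; apply: gen_x; rewrite inE.
  by rewrite !mulrA (comm_x_xm i g) -!mulrA (mulrA (x i)) -(comm_pS_x iS) -mulrA.
- case: (boolP (i \in S)) => iS.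
    rewrite mulrA y_xm_pS //; case: (g i) => [|m]; first by rewrite mul0r; exact: addspan0.
    by apply: addspan_gen; exists (upd g i m), c; split => //; exact: supported_upd.
  apply: addspan_gen; exists g, (y i * c); split => //.
    by apply: genM => //; apply: gen_y; rewrite inE.
  by rewrite !mulrA (comm_y_xm (sg i iS)) -!mulrA (mulrA (y i)) -(comm_pS_y iS) -mulrA.
Qed.

Lemma rspan_mul_gen S i z : rspan S z ->
  rspan S (z * x i) /\ rspan S (z * y i).
Proof.
move=> hz; split; move: z hz; apply: addspan_mulr => _ [d [h [sh ->]]].
- case: (boolP (i \in S)) => iS.
    rewrite -!(mulrA d) pS_ym_x //; case: (h i) => [|m].
      by rewrite mulr0; exact: addspan0.
    apply: addspan_gen; exists d, (upd h i m).
    by rewrite mulrA; split => //; exact: supported_upd.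
  apply: addspan_gen; exists (d * x i), h; split => //.
  by rewrite -!mulrA -(comm_x_ym (sh i iS)) !mulrA -(mulrA d) (comm_pS_x iS) mulrA.
- apply: addspan_gen; case: (boolP (i \in S)) => iS.
    by exists d, (upd h i (h i).+1); rewrite -mulrA ym_y; split => //; exact: supported_upd.
  exists (d * y i), h; split => //.
  by rewrite -!mulrA -(comm_y_ym i h) !mulrA -(mulrA d) (comm_pS_y iS) mulrA.
Qed.

Lemma lspan_scale S (k : K) z : lspan S z -> lspan S (k *: z).
Proof.
move: z; apply: (addspan_map (f := *:%R k)); [exact: scaler0 | exact: scalerDr |].
move=> _ [g [c [sg gc ->]]]; apply: addspan_gen.
by exists g, (k *: c); rewrite scalerAr; split => //; exact: genZ.
Qed.
Lemma rspan_scale S (k : K) z : rspan S z -> rspan S (k *: z).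
Proof.
move: z; apply: (addspan_map (f := *:%R k)); [exact: scaler0 | exact: scalerDr |].
by move=> _ [d [h [sh ->]]]; apply: addspan_gen; exists (k *: d), h; rewrite !scalerAl.
Qed.

Lemma lspan_mull S a z : subgen setT a -> lspan S z -> lspan S (a * z).
Proof.
move=> ga; elim: ga z => {a} [|i _|i _|a b _ ha _ hb|a b _ ha _ hb|k a _ ha] z hz.
- by rewrite mul1r.
- by case: (lspan_mul_gen i hz).
- by case: (lspan_mul_gen i hz).
- by rewrite mulrDl; apply: addspanD; [exact: ha | exact: hb].
- by rewrite -mulrA; apply: ha; exact: hb.
- by rewrite -scalerAl; apply: lspan_scale; exact: ha.
Qed.
Lemma rspan_mulr S a z : subgen setT a -> rspan S z -> rspan S (z * a).
Proof.
move=> ga; elim: ga z => {a} [|i _|i _|a b _ ha _ hb|a b _ ha _ hb|k a _ ha] z hz.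
- by rewrite mulr1.
- by case: (rspan_mul_gen i hz).
- by case: (rspan_mul_gen i hz).
- by rewrite mulrDr; apply: addspanD; [exact: ha | exact: hb].
- by rewrite mulrA; apply: hb; exact: ha.
- by rewrite -scalerAr; apply: rspan_scale; exact: ha.
Qed.

Definition eventually (P : nat -> Prop) := exists B, forall B', (B <= B')%N -> P B'.

Lemma eventually_and (P Q : nat -> Prop) :
  eventually P -> eventually Q -> eventually (fun B => P B /\ Q B).
Proof.
move=> [B1 h1] [B2 h2]; exists (maxn B1 B2) => B' le; split.
  by apply: h1; exact: leq_trans (leq_maxl _ _) le.
by apply: h2; exact: leq_trans (leq_maxr _ _) le.
Qed.

Lemma lspan_cutoff S z : lspan S z -> eventually (fun B => cutoff S B * z = z).
Proof.
move: z; apply: addspan_closed => [_ [g [c [_ _ ->]]]| |a b ha hb].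
- have [B hB] := exponent_bound g; exists B => B' le; rewrite mulrA cutoff_l // => i.
  exact: leq_trans (hB i) le.
- by exists 0%N => B' _; rewrite mulr0.
- by have [B hB] := eventually_and ha hb; exists B => B' /hB[e1 e2]; rewrite mulrDr e1 e2.
Qed.
Lemma rspan_cutoff S z : rspan S z -> eventually (fun B => z * cutoff S B = z).
Proof.
move: z; apply: addspan_closed => [_ [d [h [_ ->]]]| |a b ha hb].
- have [B hB] := exponent_bound h; exists B => B' le; rewrite -!(mulrA d) cutoff_r // => i.
  exact: leq_trans (hB i) le.
- by exists 0%N => B' _; rewrite mul0r.
- by have [B hB] := eventually_and ha hb; exists B => B' /hB[e1 e2]; rewrite mulrDl e1 e2.
Qed.

(* The span of the "diagonal matrix units" x^e p_S y^e, e supported on S. *)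
Definition dspan S := addspan (fun z =>
  exists e, supported e S /\ z = xm e * pS S * ym e).

Lemma telescope i B :
  \sum_(k < B) x i ^+ k * p i * y i ^+ k = 1 - x i ^+ B * y i ^+ B.
Proof.
elim: B => [|B IH]; first by rewrite big_ord0 !expr0 mulr1 subrr.
rewrite big_ord_recr /= IH /p mulrBr mulr1 mulrBl.
by rewrite (mulrA _ (x i)) -exprSr -(mulrA _ (y i)) -exprS addrA subrK.
Qed.

Lemma matrix_unit_mul T a e k : supported e T -> a \notin T ->
  x a ^+ k * p a * y a ^+ k * (xm e * pS T * ym e)
  = xm (upd e a k) * pS (a |: T) * ym (upd e a k).
Proof.
move=> se aT; have ea : e a = 0%N by apply: se.
have cyk : comm (y a ^+ k) (xm e) by apply/commr_sym/commrX/commr_sym; exact: comm_y_xm.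
have cyp : comm (y a ^+ k) (pS T) by apply/commr_sym/commrX; exact: comm_pS_y.
have cyY : comm (y a ^+ k) (ym e) by apply/commr_sym/commrX/commr_sym; exact: comm_y_ym.
have -> : xm (upd e a k) = x a ^+ k * xm e.
  by rewrite (xm_split a) /upd eqxx; congr (_ * _); apply: xm_eq => j; case: eqP => // ->.
have -> : ym (upd e a k) = ym e * y a ^+ k.
  by rewrite (ym_split a) /upd eqxx; congr (_ * _); apply: ym_eq => j; case: eqP => // ->.
rewrite pS_add // !mulrA -(mulrA _ (y a ^+ k)) cyk (mulrA _ (xm e)).
rewrite -(mulrA _ (y a ^+ k)) cyp -(mulrA _ (p a)) (comm_p_xm ea) !mulrA.
by rewrite -(mulrA _ (y a ^+ k)) cyY !mulrA.
Qed.

Lemma cutoff_add T j B : j \notin T ->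
  cutoff (j |: T) B = (1 - x j ^+ B * y j ^+ B) * cutoff T B.
Proof.
apply: setprod_add => i k; case: (eqVneq i k) => [->//|ik].
apply: commrB; first exact: commr1.
apply/commr_sym/commrB; first exact: commr1.
apply: commrM; apply/commr_sym/commrM; apply/commrX/commr_sym/commrX.
- exact: comm_xx.
- by apply: comm_yx; rewrite eq_sym.
- by apply: comm_xy; rewrite eq_sym.
- exact: comm_yy.
Qed.

Lemma dspan_cutoff S B : dspan S (cutoff S B).
Proof.
have [k cS] : exists k, #|S| = k by eexists.
elim: k S cS => [|k IH] S cS.
  rewrite (cards0_eq cS) /cutoff setprod0; apply: addspan_gen.
  by exists (fun _ => 0%N); rewrite xm0 ym0 /pS setprod0 !mulr1.
have [j jS] : exists j, j \in S by apply/card_gt0P; rewrite cS.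
have jT : j \notin S :\ j by rewrite !inE eqxx.
have cT : #|S :\ j| = k by move: cS; rewrite (cardsD1 j S) jS => -[].
rewrite -(setD1K jS) cutoff_add // -telescope; move: (IH _ cT).
apply: addspan_mull => _ [e [se ->]]; rewrite mulr_suml; apply: addspan_sum => l.
rewrite matrix_unit_mul //; apply: addspan_gen; exists (upd e j l); split => //.
apply: supported_upd; last exact: setU11.
by move=> i; rewrite !inE negb_or => /andP[_ iS]; apply: se; rewrite !inE.
Qed.

Definition pideal F := addspan (fun z =>
  exists T u v, T \in F /\ z = u * pS T * v).

Lemma pideal_gen F T u v : T \in F -> pideal F (u * pS T * v).
Proof. by move=> TF; apply: addspan_gen; exists T, u, v. Qed.

Lemma pideal_mull F w z : pideal F z -> pideal F (w * z).
Proof.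
move: z; apply: addspan_mull => _ [T [u [v [TF ->]]]].
by rewrite !mulrA; exact: pideal_gen.
Qed.
Lemma pideal_mulr F w z : pideal F z -> pideal F (z * w).
Proof.
move: z; apply: addspan_mulr => _ [T [u [v [TF ->]]]].
by rewrite -mulrA; exact: pideal_gen.
Qed.
Lemma pideal_opp F z : pideal F z -> pideal F (- z).
Proof. by rewrite -mulN1r; exact: pideal_mull. Qed.

Lemma pideal_sub (F1 F2 : {set {set 'I_n}}) :
  F1 \subset F2 -> forall z, pideal F1 z -> pideal F2 z.
Proof.
move=> /subsetP sF; apply: addspan_sub => _ [T [u [v [TF ->]]]].
by apply: pideal_gen; exact: sF.
Qed.

Definition Dideal S := pideal [set j |: S | j in ~: S].

Lemma Dideal_p S j : j \notin S -> Dideal S (pS S * p j).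
Proof.
move=> jS; rewrite comm_pS_p -(mul1r (p j * _)) -(mulr1 (1 * _)) -pS_add //.
by apply: pideal_gen; apply/imsetP; exists j; rewrite ?inE.
Qed.

Lemma commutator_gen_D S w c : subgen (~: S) c ->
  (forall j, j \notin S -> Dideal S (pS S * (w * x j - x j * w)) /\
                           Dideal S (pS S * (w * y j - y j * w))) ->
  Dideal S (pS S * (w * c - c * w)).
Proof.
move=> gc hw; elim: gc => {c} [|j|j|a b _ ha _ hb|a b ga ha _ hb|k a _ ha].
- by rewrite mulr1 mul1r subrr mulr0; exact: addspan0.
- by rewrite inE => /hw[].
- by rewrite inE => /hw[].
- have -> : w * (a + b) - (a + b) * w = (w * a - a * w) + (w * b - b * w).
    by rewrite mulrDr mulrDl opprD addrACA.
  by rewrite mulrDr; exact: addspanD.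
- have -> : w * (a * b) - a * b * w = (w * a - a * w) * b + a * (w * b - b * w).
    by rewrite mulrBl mulrBr !mulrA addrA subrK.
  rewrite mulrDr; apply: addspanD; first by rewrite mulrA; exact: pideal_mulr.
  by rewrite mulrA (comm_pS_gen ga) -mulrA; exact: pideal_mull.
- by rewrite -scalerAr -scalerAl -scalerBr -scalerAr -mulr_algl; exact: pideal_mull.
Qed.

(* For j outside S, x_j and y_j commute with the subalgebra of the variables
   outside S modulo D_S; the only nontrivial commutator, [x_j, y_j] = -p_j,
   is killed since p_S p_j generates D_S. *)
Lemma commutator_xy_D S j c : j \notin S -> subgen (~: S) c ->
  Dideal S (pS S * (x j * c - c * x j)) /\ Dideal S (pS S * (y j * c - c * y j)).
Proof.
have D0 : Dideal S 0 by exact: addspan0.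
move=> jS gc; split; apply: commutator_gen_D => // k kS; split.
- by rewrite (comm_xx j k) subrr mulr0.
- case: (eqVneq j k) => [<-|jk]; last by rewrite (comm_xy jk) subrr mulr0.
  have -> : x j * y j - y j * x j = - p j by rewrite yx /p opprB.
  by rewrite mulrN; apply: pideal_opp; exact: Dideal_p.
- case: (eqVneq j k) => [<-|jk]; last by rewrite (comm_yx jk) subrr mulr0.
  by rewrite yx; exact: Dideal_p.
- by rewrite (comm_yy j k) subrr mulr0.
Qed.

Lemma commutative_mod_D S c c' : subgen (~: S) c -> subgen (~: S) c' ->
  Dideal S (pS S * (c * c' - c' * c)).
Proof.
move=> gc gc'; apply: commutator_gen_D => // j jS.
by have [h1 h2] := commutator_xy_D jS gc; rewrite -!(opprB (_ * c)) !mulrN;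
  split; exact: pideal_opp.
Qed.

Hypothesis generated : forall a, subgen setT a.

Lemma lspan_pS S a : lspan S (a * pS S).
Proof.
have -> : a * pS S = a * (xm (fun _ => 0%N) * pS S * 1) by rewrite xm0 mul1r mulr1.
apply: lspan_mull => //; apply: addspan_gen.
by exists (fun _ => 0%N), 1; split => //; exact: gen1.
Qed.
Lemma rspan_pS S a : rspan S (pS S * a).
Proof.
have -> : pS S * a = 1 * pS S * ym (fun _ => 0%N) * a by rewrite ym0 mul1r mulr1.
by apply: rspan_mulr => //; apply: addspan_gen; exists 1, (fun _ => 0%N).
Qed.

Lemma corner_gen S a : exists c, subgen (~: S) c /\ pS S * a * pS S = pS S * c.
Proof.
rewrite -mulrA; move: (a * pS S) (lspan_pS S a); apply: addspan_closed.
- move=> _ [g [c [sg gc ->]]]; case: (boolP [forall i, g i == 0%N]) => [/forallP g0|].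
    exists c; split => //; rewrite (xm_eq (h := fun _ => 0%N)); last by move=> i; apply/eqP.
    by rewrite xm0 mul1r mulrA pS_idem.
  rewrite negb_forall => /existsP[i gi]; have iS : i \in S by apply: contraR gi => /sg ->.
  exists 0; split; first exact: gen0.
  rewrite (xm_split i g); case: (g i) gi => [|m] // _.
  by rewrite exprS !mulrA pS_x // !mul0r mulr0.
- by exists 0; split; [exact: gen0 | rewrite !mulr0].
- move=> u v [c1 [g1 e1]] [c2 [g2 e2]].
  by exists (c1 + c2); split; [exact: genD | rewrite !mulrDr e1 e2].
Qed.

Lemma cutoff_both S z : pideal [set S] z ->
  eventually (fun B => cutoff S B * z * cutoff S B = z).
Proof.
move: z; apply: addspan_closed => [_ [T [u [v [/set1P -> ->]]]]| |a b ha hb].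
- have -> : u * pS S * v = (u * pS S) * (pS S * v).
    by rewrite mulrA -(mulrA u (pS S) (pS S)) pS_idem.
  have [B hB] := eventually_and (lspan_cutoff (lspan_pS S u)) (rspan_cutoff (rspan_pS S v)).
  by exists B => B' /hB[e1 e2]; rewrite mulrA e1 -mulrA e2.
- by exists 0%N => B' _; rewrite mulr0 mul0r.
- have [B hB] := eventually_and ha hb.
  by exists B => B' /hB[e1 e2]; rewrite mulrDr mulrDl e1 e2.
Qed.

Definition corner S g h a := pS S * ym g * a * xm h * pS S.

Lemma cornerD S g h a b : corner S g h (a + b) = corner S g h a + corner S g h b.
Proof. by rewrite /corner mulrDr !mulrDl. Qed.
Lemma cornerB S g h a b : corner S g h (a - b) = corner S g h a - corner S g h b.
Proof. by rewrite /corner mulrBr !mulrBl. Qed.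

Lemma corner_other S T g h u v j : j \in T -> j \notin S ->
  Dideal S (corner S g h (u * pS T * v)).
Proof.
move=> jT jS; set W := v * xm h * pS S.
have -> : corner S g h (u * pS T * v) = pS S * (ym g * u) * (pS T * W).
  by rewrite /corner /W !mulrA.
move: (pS S * (ym g * u)) (rspan_pS S (ym g * u)).
apply: addspan_mulr => _ [d [h' [sh' ->]]].
have -> : d * pS S * ym h' * (pS T * W) = d * pS (j |: S) * (ym h' * (pS (T :\ j) * W)).
  rewrite pS_add // (pS_split jT) !mulrA -(mulrA _ (ym h')) -(comm_p_ym (sh' j jS)).
  by rewrite mulrA -(mulrA d) -comm_pS_p !mulrA.
by apply: pideal_gen; apply/imsetP; exists j; rewrite ?inE.
Qed.

(* Fix a two-sided ideal M of A; it will be the product JI. *)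
Section ModuloIdeal.
Variable M : A -> Prop.
Hypothesis M0 : M 0.
Hypothesis M_add : forall a b, M a -> M b -> M (a + b).
Hypothesis M_mull : forall r a, M a -> M (r * a).
Hypothesis M_mulr : forall r a, M a -> M (a * r).

Lemma M_span a : addspan M a -> M a.
Proof. exact: addspan_closed. Qed.

Definition MD S := addspan (fun z => M z \/ Dideal S z).

Lemma MD_M S a : M a -> MD S a.
Proof. by move=> Ma; apply: addspan_gen; left. Qed.
Lemma MD_D S a : Dideal S a -> MD S a.
Proof. by apply: addspan_sub => z Dz; apply: addspan_gen; right; exact: addspan_gen. Qed.
Lemma MD_mull S w a : MD S a -> MD S (w * a).
Proof.
move: a; apply: addspan_mull => z [Mz|Dz]; [exact/MD_M/M_mull | exact/MD_D/pideal_mull].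
Qed.
Lemma MD_mulr S w a : MD S a -> MD S (a * w).
Proof.
move: a; apply: addspan_mulr => z [Mz|Dz]; [exact/MD_M/M_mulr | exact/MD_D/pideal_mulr].
Qed.
Lemma MD_sub S a b : MD S a -> MD S b -> MD S (a - b).
Proof. by move=> ha hb; apply: addspanD => //; rewrite -mulN1r; exact: MD_mull. Qed.

(* An element of the ideal generated by p_S lies in M + D_S as soon as all
   its corners at S do: it is sandwiched between truncated units, which are
   sums of matrix units x^e p_S y^e. *)
Lemma MD_of_corners S z : pideal [set S] z ->
  (forall g h, supported g S -> supported h S -> MD S (corner S g h z)) -> MD S z.
Proof.
move=> hz hc; have [B hB] := cutoff_both hz; rewrite -(hB B) //.
suff hw w w' : dspan S w -> dspan S w' -> MD S (w * z * w').
  by apply: hw; exact: dspan_cutoff.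
move=> hw hw'; move: w' hw'; apply: addspan_mull => _ [e' [se' ->]].
rewrite -mulrA; move: w hw; apply: addspan_mulr => _ [e [se ->]].
have -> : xm e * pS S * ym e * (z * (xm e' * pS S * ym e'))
        = xm e * corner S e e' z * ym e' by rewrite /corner !mulrA.
by apply: MD_mulr; apply: MD_mull; exact: hc.
Qed.

Definition corner_cond a :=
  forall S g h, supported g S -> supported h S -> MD S (corner S g h a).

Lemma corner_cond_M m : M m -> corner_cond m.
Proof. by move=> Mm S g h _ _; apply: MD_M; rewrite /corner; auto. Qed.
Lemma corner_condB a b : corner_cond a -> corner_cond b -> corner_cond (a - b).
Proof.
by move=> ha hb S g h sg sh; rewrite cornerB; apply: MD_sub; [exact: ha | exact: hb].
Qed.

Definition upclosed (F : {set {set 'I_n}}) :=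
  forall T T', T \in F -> T \subset T' -> T' \in F.

Lemma pideal0 a : pideal set0 a -> a = 0.
Proof.
move: a; apply: addspan_closed => //; first by move=> z [T [u [v []]]]; rewrite inE.
by move=> ? ? -> ->; rewrite addr0.
Qed.

Lemma pideal_split F S a : pideal F a ->
  exists a1 a2, [/\ pideal [set S] a1, pideal (F :\ S) a2 & a = a1 + a2].
Proof.
move=> ha; apply: addspan_union; move: a ha; apply: addspan_sub => _ [T [u [v [TF ->]]]].
apply: addspan_gen; case: (eqVneq T S) => TS; [left | right]; exists T, u, v.
  by rewrite inE TS eqxx.
by rewrite !inE TS.
Qed.

Lemma upclosed_minimal F S : upclosed F -> S \in F ->
  (forall T, T \in F -> #|S| <= #|T|)%N ->
  [/\ forall T, T \in F :\ S -> exists2 j, j \in T & j \notin S,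
      [set j |: S | j in ~: S] \subset F :\ S
    & upclosed (F :\ S)].
Proof.
move=> uF SF Smin.
have meet T : T \in F :\ S -> exists2 j, j \in T & j \notin S.
  rewrite !inE => /andP[TS TF]; case: (boolP (T \subset S)) => [sub|/subsetPn//].
  have : T \proper S by rewrite properEneq TS sub.
  by move/proper_card; rewrite ltnNge Smin.
split=> //.
  apply/subsetP => _ /imsetP[j /[!inE] jS ->]; apply/andP; split.
    by apply: contraNneq jS => <-; rewrite setU11.
  by apply: uF SF _; exact: subsetUr.
move=> T T' TF sub; have [j jT jS] := meet T TF.
move: TF; rewrite !inE => /andP[_ TF]; apply/andP; split; last exact: uF TF sub.
by apply: contraNneq jS => eTS; rewrite -eTS (subsetP sub).
Qed.

Lemma corner_pideal_other F S g h a :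
  (forall T, T \in F -> exists2 j, j \in T & j \notin S) ->
  pideal F a -> Dideal S (corner S g h a).
Proof.
move=> hF; move: a; apply: addspan_closed => [_ [T [u [v [TF ->]]]]| |a1 a2 h1 h2].
- by have [j jT jS] := hF T TF; exact: corner_other jT jS.
- by rewrite /corner mulr0 !mul0r; exact: addspan0.
- by rewrite cornerD; exact: addspanD.
Qed.

Lemma peel_step F S a :
  (forall T, T \in F :\ S -> exists2 j, j \in T & j \notin S) ->
  [set j |: S | j in ~: S] \subset F :\ S ->
  pideal F a -> corner_cond a -> exists2 m, M m & pideal (F :\ S) (a - m).
Proof.
move=> meet genD ha ca; have [a1 [a2 [h1 h2 ea]]] := pideal_split S ha.
have : MD S a1.
  apply: MD_of_corners => // g h sg sh; have -> : a1 = a - a2 by rewrite ea addrK.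
  rewrite cornerB; apply: MD_sub; first exact: ca.
  by apply: MD_D; exact: corner_pideal_other meet h2.
case/addspan_union => m [d [hm hd ea1]]; exists m; first exact: M_span.
rewrite ea ea1 (addrC m d) addrAC addrK; apply: addspanD => //.
exact: pideal_sub genD _ (addspan_idem hd).
Qed.

Lemma peel k F a : (#|F| <= k)%N -> upclosed F -> pideal F a -> corner_cond a -> M a.
Proof.
elim: k F a => [|k IH] F a cF uF ha ca.
  have /eqP/cards0_eq F0 : #|F| == 0%N by rewrite -leqn0.
  by move: ha; rewrite F0 => /pideal0 ->.
have [F0|[S0 S0F]] := set_0Vmem F; first by move: ha; rewrite F0 => /pideal0 ->.
have [S SF Smin] := arg_minnP (fun T : {set 'I_n} => #|T|) S0F.
have {}SF : S \in F by [].
have [meet genD uF'] := upclosed_minimal uF SF Smin.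
have [m Mm hr] := peel_step meet genD ha ca.
have cF' : (#|F :\ S| <= k)%N by move: cF; rewrite (cardsD1 S F) SF.
have cr := corner_condB ca (corner_cond_M Mm).
by rewrite -(subrK m a) addrC; apply: M_add Mm (IH _ _ cF' uF' hr cr).
Qed.

Variables I J : A -> Prop.
Hypothesis I_mull : forall r a, I a -> I (r * a).
Hypothesis I_mulr : forall r a, I a -> I (a * r).
Hypothesis J_mull : forall r a, J a -> J (r * a).
Hypothesis J_mulr : forall r a, J a -> J (a * r).
Hypothesis JI_M : forall b a, J b -> I a -> M (b * a).

(* The corners of a product uv, u in I and v in J, lie in M + D_S: after
   inserting a truncated unit between u and v, each term is a product of two
   elements of the corner algebra, which is commutative modulo D_S. *)
Lemma corner_prod S g h u v : I u -> J v -> MD S (corner S g h (u * v)).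
Proof.
move=> Iu Jv; have [B hB] := lspan_cutoff (lspan_pS S (v * xm h)).
have -> : corner S g h (u * v) = pS S * ym g * u * (v * xm h * pS S).
  by rewrite /corner !mulrA.
rewrite -(hB B) //; move: (cutoff S B) (dspan_cutoff S B).
apply: (addspan_map (f := fun w => pS S * ym g * u * (w * (v * xm h * pS S)))).
- by rewrite mul0r mulr0.
- by move=> ? ? /=; rewrite mulrDl mulrDr.
move=> _ [e [se ->]] /=.
have -> : pS S * ym g * u * (xm e * pS S * ym e * (v * xm h * pS S))
        = pS S * (ym g * u * xm e) * pS S * (pS S * (ym e * v * xm h) * pS S).
  by rewrite !mulrA -(mulrA _ (pS S) (pS S)) pS_idem.
have [c [gc ec]] := corner_gen S (ym g * u * xm e).
have [c' [gc' ec']] := corner_gen S (ym e * v * xm h).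
have Ic : I (pS S * c) by rewrite -ec; do 2!(apply: I_mulr; apply: I_mull).
have Jc' : J (pS S * c') by rewrite -ec'; do 2!(apply: J_mulr; apply: J_mull).
have mul_pS c1 c2 : subgen (~: S) c1 -> pS S * c1 * (pS S * c2) = pS S * (c1 * c2).
  by move=> g1; rewrite -mulrA (mulrA c1) -(comm_pS_gen g1) !mulrA pS_idem -mulrA.
rewrite ec ec' mul_pS // -(subrK (c' * c) (c * c')) mulrDr.
apply: addspanD; first exact/MD_D/commutative_mod_D.
by rewrite -mul_pS //; apply: MD_M; exact: JI_M.
Qed.

(* IJ is contained in M: peel the family of all index sets, starting from
   p_set0 = 1. *)
Lemma ideal_mul_sub a : ideal_mul I J a -> M a.
Proof.
move=> [s [hs ->]].
apply: (@peel #|[set: {set 'I_n}]| setT) => //; first by move=> T T' _ _; rewrite inE.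
  have -> : \sum_(q <- s) q.1 * q.2 = 1 * pS set0 * \sum_(q <- s) q.1 * q.2.
    by rewrite /pS setprod0 !mul1r.
  by apply: pideal_gen; rewrite inE.
move=> S g h sg sh; elim: s hs => [|q s IHs] hs.
  by rewrite big_nil /corner mulr0 !mul0r; exact: addspan0.
rewrite big_cons cornerD; apply: addspanD.
  by have [Iq Jq] := hs q (mem_head _ _); exact: corner_prod.
by apply: IHs => q' hq'; apply: hs; rewrite inE hq' orbT.
Qed.

End ModuloIdeal.
End Generators.

(* A presentation of S_n is generated, as an algebra, by the x_i and y_i: the
   subalgebra they generate satisfies the relations, so the universal property
   yields a retraction onto it, which is the identity by uniqueness. *)
Section Generation.
Variables (K : fieldType) (n : nat) (A : algType K) (x y : 'I_n -> A).

(* Membership in the generated subalgebra, as a (classically decided)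
   boolean predicate, so that the subalgebra can be built as a subtype. *)
Definition in_subgen (a : A) : bool :=
  if excluded_middle_informative (subgen x y setT a) then true else false.

Lemma in_subgenP a : reflect (subgen x y setT a) (in_subgen a).
Proof. by rewrite /in_subgen; case: excluded_middle_informative => h; constructor. Qed.

Fact in_subgen_closed : GRing.subsemialg_closed in_subgen.
Proof.
split; first exact/in_subgenP/gen1.
- by split=> [|a b /in_subgenP ha /in_subgenP hb]; apply/in_subgenP;
    [exact: gen0 | exact: genD].
- by move=> c a /in_subgenP ha; apply/in_subgenP; exact: genZ.
- by move=> a b /in_subgenP ha /in_subgenP hb; apply/in_subgenP; exact: genM.
Qed.
HB.instance Definition _ := GRing.isSubalgClosed.Build K A in_subgen in_subgen_closed.

Record subgen_alg := SubgenAlg { subgen_val : A; _ : in_subgen subgen_val }.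
HB.instance Definition _ := [isSub for subgen_val].
HB.instance Definition _ := [Choice of subgen_alg by <:].
HB.instance Definition _ := [SubChoice_isSubAlgebra of subgen_alg by <:].

Section Inclusion.
Variable f : {lrmorphism A -> subgen_alg}.
Definition incl_comp := fun a => subgen_val (f a).
HB.instance Definition _ := GRing.RMorphism.copy incl_comp (val \o f).
HB.instance Definition _ := GRing.Linear.copy incl_comp (val \o f).
End Inclusion.

Lemma Sn_generated : is_Sn x y -> forall a, subgen x y setT a.
Proof.
move=> [[yx comm_ne] univ] a.
have hx i : in_subgen (x i) by apply/in_subgenP; apply: gen_x; rewrite inE.
have hy i : in_subgen (y i) by apply/in_subgenP; apply: gen_y; rewrite inE.
pose u i := SubgenAlg (hx i); pose v i := SubgenAlg (hy i).
have rels : Sn_rels u v.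
  split=> [i|i j /comm_ne[e1 e2 e3]].
    by apply: val_inj; rewrite rmorphM rmorph1 /= yx.
  by split; apply: val_inj; rewrite !rmorphM.
have [[f hf] _] := univ subgen_alg u v rels.
have [_ uniq] := univ A x y (conj yx comm_ne).
have <- : incl_comp f a = a.
  apply: (uniq (incl_comp f) idfun) => // i; have [hfx hfy] := hf i.
  by split; [exact: (f_equal subgen_val hfx) | exact: (f_equal subgen_val hfy)].
by apply/in_subgenP; exact: valP.
Qed.

End Generation.

Section IdealMul.
Variables (R : nzRingType) (I J : R -> Prop).

Lemma ideal_mul0 : ideal_mul I J 0.
Proof. by exists [::]; rewrite big_nil. Qed.

Lemma ideal_mulD a b : ideal_mul I J a -> ideal_mul I J b -> ideal_mul I J (a + b).
Proof.
move=> [s [hs ->]] [t [ht ->]]; exists (s ++ t); split; last by rewrite big_cat.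
by move=> q; rewrite mem_cat => /orP[/hs|/ht].
Qed.

Lemma ideal_mul_mull r a : (forall b, I b -> I (r * b)) ->
  ideal_mul I J a -> ideal_mul I J (r * a).
Proof.
move=> Ir [s [hs ->]]; exists [seq (r * q.1, q.2) | q <- s]; split.
  by move=> q /mapP[q' /hs [h1 h2] ->]; split => //; exact: Ir.
by rewrite big_map mulr_sumr; apply: eq_bigr => q _; rewrite mulrA.
Qed.

Lemma ideal_mul_mulr r a : (forall b, J b -> J (b * r)) ->
  ideal_mul I J a -> ideal_mul I J (a * r).
Proof.
move=> Jr [s [hs ->]]; exists [seq (q.1, q.2 * r) | q <- s]; split.
  by move=> q /mapP[q' /hs [h1 h2] ->]; split => //; exact: Jr.
by rewrite big_map mulr_suml; apply: eq_bigr => q _; rewrite mulrA.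
Qed.

Lemma ideal_mul_prod a b : I a -> J b -> ideal_mul I J (a * b).
Proof.
move=> Ia Jb; exists [:: (a, b)]; rewrite big_seq1; split => // q.
by rewrite inE => /eqP ->.
Qed.

End IdealMul.

Lemma ideal_mul_incl (K : fieldType) (n : nat) (A : algType K) (x y : 'I_n -> A) :
  is_Sn x y -> forall I J : A -> Prop, two_sided_ideal I -> two_sided_ideal J ->
  forall c : A, ideal_mul I J c -> ideal_mul J I c.
Proof.
move=> hS I J [_ [_ hI]] [_ [_ hJ]]; have [[yx comm_ne] _] := hS.
apply: (ideal_mul_sub yx comm_ne (Sn_generated hS)).
- exact: ideal_mul0.
- exact: ideal_mulD.
- by move=> r a; apply: ideal_mul_mull => b /(hJ r)[].
- by move=> r a; apply: ideal_mul_mulr => b /(hI r)[].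
- by move=> r a /(hI r)[].
- by move=> r a /(hI r)[].
- by move=> r a /(hJ r)[].
- by move=> r a /(hJ r)[].
- by move=> b a Jb Ia; exact: ideal_mul_prod.
Qed.

Unset Implicit Arguments.
Set Strict Implicit.

Theorem theorem2p8 (K : fieldType) (n : nat) (A : algType K)
    (x y : 'I_n -> A) :
  (1 <= n)%N -> is_Sn x y ->
  forall I J : A -> Prop, two_sided_ideal I -> two_sided_ideal J ->
    forall c : A, ideal_mul I J c <-> ideal_mul J I c.
Proof.
move=> _ hS I J hI hJ c.
by split; [exact: (ideal_mul_incl hS hI hJ) | exact: (ideal_mul_incl hS hJ hI)].
Qed.
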